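(* Let $d\ge 1$ and let $P\subset\mathbb{R}^d$ be a finite set of $n\ge 1$ points. Then there exists $p\in P$ such that $p\in T$ for every orthant $T$ of fixed orientation with $|T\cap P|>(1-\frac{1}{d})n$.
   Context: An orthant of fixed orientation in $\mathbb{R}^d$ is a set of the form $\{x\in\mathbb{R}^d: x_j\le a_j \text{ for all } 1\le j\le d\}$ with $a_1,\dots,a_d\in\mathbb{R}$ (the intersection of $d$ halfspaces whose outward normals are the $d$ positive coordinate directions). *)

(* Points of R^d are row vectors 'rV[R]_d over an arbitrary
   real (ordered) field R; the statement is purely order-theoretic. *)
From HB Require Import structures.
From mathcomp Require Import all_boot all_order all_algebra.
Set Implicit Arguments. Unset Strict Implicit. Unset Printing Implicit Defensive.
Import Order.TTheory GRing.Theory Num.Theory.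
Local Open Scope ring_scope.

Definition orthant (R : realFieldType) (d : nat) (a : 'rV[R]_d) : pred 'rV[R]_d :=
  fun x => [forall j : 'I_d, x 0 j <= a 0 j].

From HB Require Import structures.
From mathcomp Require Import all_boot all_order all_algebra.
From mathcomp Require Import zify lra.
Set Implicit Arguments. Unset Strict Implicit. Unset Printing Implicit Defensive.
Import Order.TTheory GRing.Theory Num.Theory.
Local Open Scope ring_scope.

(* Write n = size P.  For a coordinate j, call a point p of P
   j-shallow when fewer than n/d points q of P satisfy p_j <= q_j.  All the
   j-shallow points lie weakly above (in coordinate j) the j-shallow point of
   smallest j-coordinate, which is itself j-shallow; hence there are fewer than
   n/d of them.  A union bound over the d coordinates leaves fewer than n
   shallow points, so some p in P is shallow in no coordinate.  This p lies in
   every heavy orthant T: if a_j < p_j for the apex a of T, the at least n/d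
   points q with p_j <= q_j all miss T, so |T ∩ P| <= n - n/d. *)

Lemma sub_in_count (T : eqType) (a1 a2 : pred T) (s : seq T) :
  {in s, forall x, a1 x -> a2 x} -> (count a1 s <= count a2 s)%N.
Proof.
move=> sub12; rewrite -(eq_in_count (a1 := fun x => a1 x && (x \in s))).
  by apply: sub_count => x /andP[a1x xs]; exact: sub12.
by move=> x xs; rewrite xs andbT.
Qed.

Lemma seq_argmin (disp : Order.disp_t) (O : orderType disp) (T : eqType)
    (f : T -> O) (s : seq T) :
  s != [::] -> exists2 x, x \in s & {in s, forall y, (f x <= f y)%O}.
Proof.
elim: s => [//|x s IH] _.
have [-> | /IH [z zs minz]] := eqVneq s [::].
  by exists x; rewrite ?mem_head // => y; rewrite inE => /eqP ->.
have [fxz | fzx] := leP (f x) (f z).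
  exists x; first exact: mem_head.
  by move=> y; rewrite inE => /predU1P [-> // | ys]; exact: le_trans fxz (minz y ys).
exists z; first by rewrite inE zs orbT.
by move=> y; rewrite inE => /predU1P [-> | ys]; [exact: ltW | exact: minz].
Qed.

Definition upper_count (disp : Order.disp_t) (O : orderType disp) (T : Type)
    (f : T -> O) (s : seq T) (x : T) : nat :=
  count (fun q => (f x <= f q)%O) s.

(* Call x shallow (for the weight k and total n) when
   upper_count f s x * k < n.  Then fewer than n/k elements of s are
   shallow: they all lie above the shallowest of them. *)
Lemma few_shallow (disp : Order.disp_t) (O : orderType disp) (T : eqType)
    (f : T -> O) (s : seq T) (k n : nat) :
  (0 < n)%N ->
  (count (fun x => upper_count f s x * k < n)%N s * k < n)%N.
Proof.
move=> n_gt0; set shallow := fun x => (upper_count f s x * k < n)%N.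
have [/eqP | nonempty] := eqVneq (filter shallow s) [::].
  by rewrite -size_eq0 size_filter => /eqP ->.
have [x] := seq_argmin f nonempty; rewrite mem_filter => /andP[shallow_x xs] minx.
apply: leq_ltn_trans shallow_x; rewrite leq_mul2r; apply/orP; right.
by apply: sub_in_count => q qs shallow_q; apply: minx; rewrite mem_filter shallow_q.
Qed.

Lemma count_exists_le_sum (T : Type) (I : finType) (b : I -> pred T) (s : seq T) :
  (count (fun x => [exists i, b i x]) s <= \sum_i count (b i) s)%N.
Proof.
elim: s => [|x s IH] /=; first by rewrite big1.
rewrite big_split /=; apply: leq_add => //.
by case: existsP => [[i bix] | //]; rewrite (bigD1 i) //= bix.
Qed.

Lemma exists_nowhere_bad (T : eqType) (I : finType) (bad : I -> pred T)
    (s : seq T) :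
  (0 < #|I|)%N -> (forall i, count (bad i) s * #|I| < size s)%N ->
  exists2 p, p \in s & forall i, ~~ bad i p.
Proof.
move=> I_gt0 rare; have [i0 _] := card_gt0P I_gt0.
have s_gt0 : (0 < size s)%N by exact: leq_ltn_trans (rare i0).
have sum_lt : (\sum_i count (bad i) s < size s)%N.
  rewrite -(ltn_pmul2r I_gt0) big_distrl /=.
  apply: (@leq_ltn_trans (\sum_(i : I) (size s).-1)).
    by apply: leq_sum => i _; rewrite -ltnS prednK ?rare.
  rewrite sum_nat_const (eq_card (B := I)) // mulnC ltn_pmul2r //; lia.
have : ~~ all (fun p => [exists i, bad i p]) s.
  apply: contraTN sum_lt; rewrite all_count -leqNgt => /eqP <-.
  exact: count_exists_le_sum.
rewrite -has_predC => /hasP [p ps /existsPn nowhere_bad]; by exists p.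
Qed.

(* If p leaves the orthant with apex a through coordinate j, then every point
   q with p_j <= q_j leaves it too, so the orthant and the upper set of p in
   coordinate j are disjoint parts of P. *)
Lemma orthant_misses_upper (R : realFieldType) (d : nat) (P : seq 'rV[R]_d)
    (a p : 'rV[R]_d) (j : 'I_d) :
  a 0 j < p 0 j ->
  (count (orthant a) P + upper_count (fun x : 'rV[R]_d => x 0%R j) P p <= size P)%N.
Proof.
move=> apex_lt; rewrite -(count_predC (orthant a)) leq_add2l.
apply: sub_count => q /= p_le_q; apply/negP => /forallP /(_ j) q_le_a.
by move: (lt_le_trans apex_lt p_le_q); rewrite ltNge q_le_a.
Qed.

(* The arithmetic of the conclusion: a subset of size c disjoint from one of
   size u >= n/d has c <= (1 - 1/d) n. *)
Lemma heavy_count_bound (R : realFieldType) (d n c u : nat) :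
  (0 < d)%N -> (n <= u * d)%N -> (c + u <= n)%N ->
  ~ ((1 - (d%:R : R)^-1) * n%:R < c%:R).
Proof.
move=> d_gt0 n_le_ud cu_le_n heavy.
have d_pos : 0 < (d%:R : R) by rewrite ltr0n.
have cu_le_n' : (c%:R + u%:R : R) <= n%:R by rewrite -natrD ler_nat.
have : (u%:R : R) < (d%:R)^-1 * n%:R by lra.
rewrite ltr_pdivlMl // -natrM ltr_nat mulnC.
by rewrite ltnNge n_le_ud.
Qed.

(* P is a finite set of points, given as a duplicate-free list; n = size P. *)
Theorem corollary3 (R : realFieldType) (d : nat) (P : seq 'rV[R]_d) :
  (1 <= d)%N -> uniq P -> (1 <= size P)%N ->
  exists2 p : 'rV[R]_d, p \in P &
    forall a : 'rV[R]_d,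
      (1 - (d%:R : R)^-1) * (size P)%:R < (count (orthant a) P)%:R :> R ->
      orthant a p.
Proof.
move=> d_gt0 _ n_gt0.
pose shallow (j : 'I_d) (p : 'rV[R]_d) :=
  (upper_count (fun x : 'rV[R]_d => x 0%R j) P p * d < size P)%N.
have [p pP deep] : exists2 p, p \in P & forall j, ~~ shallow j p.
  apply: exists_nowhere_bad; rewrite card_ord // => j.
  exact: few_shallow.
exists p => // a heavy; apply/forallP => j; rewrite leNgt; apply/negP => apex_lt.
apply: (heavy_count_bound d_gt0 _ (orthant_misses_upper P apex_lt) heavy).
by rewrite leqNgt deep.
Qed.
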